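(* Let $\Gamma$ be a connected $3$-plane drawing. Then \[ 4|E_\times| \;\ge\; 2N(B_4)+2N(B_5)+2N(U_5)+2N(U_6). \]
   Context: Drawings are on the sphere: vertices are distinct points, edges (of a graph possibly with parallel edges, no loops) are Jordan arcs; any two edges share finitely many points, each a common endpoint or a proper crossing; no three edges cross at one point; no edge crosses itself; adjacent edges do not cross. A drawing is $3$-plane if every edge is crossed at most three times. For $i\in\{0,1,2,3\}$, $E_i$ is the set of edges with exactly $i$ crossings, and $E_\times=E_1\cup E_2\cup E_3$. An edge with $i$ crossings is split into $i+1$ edge-segments; an edge-segment is inner if both its endpoints are crossings and outer otherwise. The planarization replaces each crossing by a degree-$4$ vertex; the drawing is connected if its planarization is connected. Cells are the components of the sphere minus all vertices and edges; the boundary of a cell is a cyclic sequence alternating between edge-segments and vertices/crossings. Cell types: $B_4$: boundary $v$, outer segment, crossing, inner segment, crossing, outer segment. $B_5$: boundary $v$, outer segment, crossing, inner segment, crossing, inner segment, crossing, outer segment. $U_5$: boundary $u$, uncrossed edge $uv$, $v$, outer segment, crossing, outer segment (two vertices $u,v$). $U_6$: boundary $u$, uncrossed edge $uv$, $v$, outer segment, crossing, inner segment, crossing, outer segment. $N(T)$ is the number of cells of type $T$. *)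

(* Combinatorial encoding of a connected drawing on the sphere
   via its planarization (a connected plane map = rotation system of genus 0). *)
From mathcomp Require Import all_boot fingroup perm.
Set Implicit Arguments. Unset Strict Implicit. Unset Printing Implicit Defensive.

(* The planarization of a drawing, given as a combinatorial map:
   - [dart]  : half-edges of edge-segments of the planarization;
   - [pnode] : nodes of the planarization (vertices of the drawing and crossings);
   - [gedge] : edges of the drawn graph;
   - [alpha] : the other half of the same edge-segment (fixed-point-free involution);
   - [sigma] : rotation (cyclic order) of darts around their node;
   - [node]  : the node a dart leaves from;
   - [cr]    : which nodes are crossings (the others are vertices of the graph);
   - [eof]   : the edge of the graph the segment of a dart belongs to. *)
Record pdrawing := PDrawing {
  dart : finType;
  pnode : finType;
  gedge : finType;
  palpha : dart -> dart;
  psigma : {perm dart};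
  dnode : dart -> pnode;
  pcr : pred pnode;
  peof : dart -> gedge
}.

Section Drawings.
Variable G : pdrawing.

Local Notation D := (dart G).
Local Notation alpha := (@palpha G).
Local Notation sigma := (@psigma G).
Local Notation node := (@dnode G).
Local Notation cr := (@pcr G).
Local Notation eof := (@peof G).

(* face permutation: follow a segment, then turn to the next dart *)
Definition phi (d : D) : D := sigma (alpha d).
(* at a crossing, the dart opposite to d (continuation of the same edge) *)
Definition pass (d : D) : D := sigma (sigma d).

Definition cx (d : D) : bool := cr (node d).
Definition vx (d : D) : bool := ~~ cr (node d).

Definition cross_darts (e : gedge G) : {set D} := [set d | (eof d == e) && cx d].
Definition end_darts (e : gedge G) : {set D} := [set d | (eof d == e) && vx d].

(* number of crossings on e: each crossing of e contributes two darts of e *)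
Definition ncross (e : gedge G) : nat := #|cross_darts e| %/ 2.

Definition Ecross : {set gedge G} := [set e | 0 < ncross e].

Definition endpoint (e : gedge G) (v : pnode G) : bool :=
  [exists d in end_darts e, node d == v].

Definition plan_rel : rel D := [rel x y | (y == alpha x) || (y == sigma x)].
Definition edge_rel : rel D := [rel x y | (y == alpha x) || (cx x && (y == pass x))].

Definition face (d : D) : {set D} := [set d' | fconnect phi d d'].
Definition faces : {set {set D}} := [set face d | d : D].

Definition is_drawing : Prop :=
  (forall d, alpha (alpha d) = d) /\ (forall d, alpha d != d) /\
  (forall d d', (node d == node d') = fconnect sigma d d') /\
  (forall p, exists d, node d = p) /\
  (* sphere: Euler's formula  #nodes - #segments + #cells = 2 *)
  2 * (#|pnode G| + #|faces|) = #|D| + 4 /\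
  (* crossings: degree 4, proper crossing of two distinct, non-adjacent edges *)
  (forall c, cr c -> #|[set d | node d == c]| = 4) /\
  (forall d, cx d -> eof (pass d) = eof d /\ eof (sigma d) != eof d) /\
  (forall d, cx d -> forall v, ~~ cr v ->
             ~~ (endpoint (eof d) v && endpoint (eof (sigma d)) v)) /\
  (* edges: Jordan arcs between two distinct vertices (no loops) *)
  (forall d, eof (alpha d) = eof d) /\
  (forall e, #|end_darts e| = 2) /\
  (forall e d d', d \in end_darts e -> d' \in end_darts e -> d != d' ->
                  node d != node d') /\
  (forall e d d', eof d = e -> eof d' = e -> connect edge_rel d d').

Definition connected_drawing : Prop := forall d d', connect plan_rel d d'.

Definition three_plane : Prop := forall e, ncross e <= 3.

(* cell types, read off the boundary walk  node d, seg d, node (phi d), ... *)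
Definition typeB4 (F : {set D}) : bool :=
  (#|F| == 3) && [exists d in F, [&& vx d, cx (phi d) & cx (phi (phi d))]].
Definition typeB5 (F : {set D}) : bool :=
  (#|F| == 4) &&
  [exists d in F, [&& vx d, cx (phi d), cx (phi (phi d)) & cx (phi (phi (phi d)))]].
Definition typeU5 (F : {set D}) : bool :=
  (#|F| == 3) && [exists d in F, [&& vx d, vx (phi d) & cx (phi (phi d))]].
Definition typeU6 (F : {set D}) : bool :=
  (#|F| == 4) &&
  [exists d in F, [&& vx d, vx (phi d), cx (phi (phi d)) & cx (phi (phi (phi d)))]].

Definition N (T : {set D} -> bool) : nat := #|[set F in faces | T F]|.

End Drawings.

From mathcomp Require Import all_boot fingroup perm.
Set Implicit Arguments. Unset Strict Implicit. Unset Printing Implicit Defensive.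

(* Call a dart switching when its segment joins a vertex to a
   crossing, i.e. it is a dart of an outer segment of a crossed edge.  A
   crossed edge has two outer segments, hence at most four switching darts,
   and an uncrossed edge has none.  The boundary walk of a cell of type B4,
   B5, U5 or U6 visits both a vertex and a crossing, so it switches at least
   twice (once from a vertex to a crossing and once back).  As the four types
   are mutually exclusive and the cells partition the darts,
   2 (N(B4) + N(B5) + N(U5) + N(U6)) <= #switching darts <= 4 |E_x|. *)

Lemma exists_exit (T : Type) (f : T -> T) (P : pred T) x n :
  P x -> ~~ P (iter n f x) -> exists k, P (iter k f x) && ~~ P (iter k.+1 f x).
Proof.
elim: n => [|n IHn] /= Px; first by rewrite Px.
case Pn: (P (iter n f x)) => notPSn; first by exists n; rewrite Pn.
by apply: IHn; rewrite // Pn.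
Qed.

Section Drawing.

Variable G : pdrawing.

Local Notation D := (dart G).
Local Notation alpha := (@palpha G).
Local Notation sigma := (psigma G).
Local Notation node := (@dnode G).
Local Notation eof := (@peof G).
Local Notation phi := (@phi G).

Hypothesis alphaK : involutive alpha.
Hypothesis node_sigma_orbit : forall d d' : D, (node d == node d') = fconnect sigma d d'.
Hypothesis card_crossing : forall c, pcr c -> #|[set d : D | node d == c]| = 4.
Hypothesis eof_pass : forall d : D, cx d -> eof (pass d) = eof d.
Hypothesis eof_alpha : forall d : D, eof (alpha d) = eof d.
Hypothesis card_end_darts : forall e : gedge G, #|end_darts e| = 2.

(* [phi d] leaves the far end of the segment of [d]. *)
Definition switching (d : D) : bool := vx d != vx (phi d).

Lemma cxE (d : D) : cx d = ~~ vx d.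
Proof. by rewrite /vx negbK. Qed.

Lemma node_sigma (d : D) : node (sigma d) = node d.
Proof. by apply/eqP; rewrite eq_sym node_sigma_orbit fconnect1. Qed.

Lemma node_phi (d : D) : node (phi d) = node (alpha d).
Proof. exact: node_sigma. Qed.

Lemma phi_inj : injective phi.
Proof. by move=> x y /perm_inj; apply: (can_inj alphaK). Qed.

Lemma pass_neq (d : D) : cx d -> pass d != d.
Proof.
move=> cd; apply/eqP => passd.
have cycle_d : fcycle sigma [:: d; sigma d].
  by rewrite /= -[sigma (sigma d)]/(pass d) passd !eqxx.
have order_d : #|[set d' | node d' == node d]| = fingraph.order sigma d.
  by apply: eq_card => d'; rewrite inE eq_sym node_sigma_orbit.
by have := order_le_cycle cycle_d (mem_head d _); rewrite -order_d card_crossing.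
Qed.

Lemma switching_Ecross (d : D) : switching d -> eof d \in Ecross G.
Proof.
move=> sd.
have [y cy eyd] : exists2 y, cx y & eof y = eof d.
  case vd: (vx d); last by exists d; rewrite // cxE vd.
  exists (alpha d); last exact: eof_alpha.
  by move: sd; rewrite /switching vd /vx /cx node_phi; case: (pcr _).
rewrite inE /ncross divn_gt0 //.
apply: (@leq_trans #|[set y; pass y]|); first by rewrite cards2 eq_sym pass_neq.
apply/subset_leq_card/subsetP => z; rewrite !inE => /orP[]/eqP->.
  by rewrite eyd eqxx cy.
by rewrite eof_pass // eyd eqxx /cx /pass !node_sigma.
Qed.

Lemma card_switching_edge (e : gedge G) : #|[set d | switching d & eof d == e]| <= 4.
Proof.
apply: (@leq_trans #|end_darts e :|: alpha @: end_darts e|).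
  apply/subset_leq_card/subsetP => d; rewrite !inE => /andP[sd /eqP ede].
  case vd: (vx d); first by rewrite ede eqxx.
  apply/orP; right; apply/imsetP; exists (alpha d); last by rewrite alphaK.
  rewrite inE eof_alpha ede eqxx.
  by move: sd; rewrite /switching vd /vx node_phi; case: (pcr _).
apply: leq_trans (leq_card_setU _ _).1 _.
by rewrite card_end_darts -[4]/(2 + 2) leq_add2l -(card_end_darts e) leq_imset_card.
Qed.

Lemma card_switching : #|[set d | switching d]| <= 4 * #|Ecross G|.
Proof.
rewrite -sum1_card (partition_big eof (mem (Ecross G))); last first.
  by move=> d; rewrite inE; apply: switching_Ecross.
rewrite mulnC -sum_nat_const; apply: leq_sum => e _.
rewrite sum1dep_card; apply: leq_trans (card_switching_edge e).
by apply/subset_leq_card/subsetP => d; rewrite !inE.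
Qed.

Lemma mem_face_iter (d : D) i : iter i phi d \in face d.
Proof. by rewrite inE fconnect_iter. Qed.

Lemma face_eq (F : {set D}) d : F \in faces G -> d \in F -> F = face d.
Proof.
case/imsetP => d0 _ ->; rewrite inE => d0d.
apply/setP => x; rewrite !inE.
by rewrite (same_connect (fconnect_sym phi_inj) d0d).
Qed.

Lemma face_mem (x d : D) : x \in face d -> face x = face d.
Proof. by move=> xd; rewrite (@face_eq (face d) x) //; apply: imset_f. Qed.

Lemma card_switching_face (d x y : D) :
  x \in face d -> y \in face d -> vx x -> cx y ->
  1 < #|[set a in face d | switching a]|.
Proof.
move=> xd yd vxx cxy.
have xy : fconnect phi x y by move: yd; rewrite -(face_mem xd) inE.
have yx : fconnect phi y x by move: xd; rewrite -(face_mem yd) inE.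
have [k /andP[vk ck]] : exists k, vx (iter k phi x) && ~~ vx (iter k.+1 phi x).
  by apply: (exists_exit (n := findex phi x y)) vxx _; rewrite iter_findex // -cxE.
have [l /andP[cl vl]] : exists l, cx (iter l phi y) && ~~ cx (iter l.+1 phi y).
  by apply: (exists_exit (n := findex phi y x)) cxy _; rewrite iter_findex // cxE negbK.
apply: (@leq_trans #|[set iter k phi x; iter l phi y]|).
  by rewrite cards2 ltnS lt0b; apply/eqP => kl; move: cl; rewrite -kl cxE vk.
apply/subset_leq_card/subsetP => z; rewrite in_set2 => /orP[]/eqP->; rewrite in_set.
  rewrite -(face_mem xd) mem_face_iter /switching -iterS.
  by move: vk ck; case: (vx _); case: (vx _).
rewrite -(face_mem yd) mem_face_iter /switching -iterS.
by move: cl vl; rewrite !cxE; case: (vx _); case: (vx _).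
Qed.

Definition typed_cell (F : {set D}) : bool := [|| typeB4 F, typeB5 F, typeU5 F | typeU6 F].

Lemma typed_cell_mixed (F : {set D}) :
  typed_cell F -> exists2 d, d \in F & vx d && cx (phi (phi d)).
Proof.
case/or4P => /andP[_ /existsP[d /andP[Fd]]];
  [case/and3P | case/and4P | case/and3P | case/and4P] => vd _ c2; do ?move=> _;
  by exists d; rewrite ?vd.
Qed.

Lemma card_switching_typed_cell (F : {set D}) :
  F \in faces G -> typed_cell F -> 1 < #|[set d in F | switching d]|.
Proof.
move=> FF /typed_cell_mixed[d Fd /andP[vd cd]]; rewrite (face_eq FF Fd).
exact: card_switching_face (mem_face_iter d 0) (mem_face_iter d 2) vd cd.
Qed.

Lemma card_typed_cells : 2 * N typed_cell <= #|[set d | switching d]|.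
Proof.
set T := [set F in faces G | typed_cell F].
apply: (@leq_trans #|[set d | switching d & face d \in T]|); last first.
  by apply/subset_leq_card/subsetP => d; rewrite !inE => /andP[].
rewrite -sum1_card (partition_big (@face G) (mem T)) => [|d]; last by rewrite inE => /andP[].
rewrite mulnC -sum_nat_const; apply: leq_sum => F; rewrite inE => /andP[FF tF].
rewrite sum1dep_card; apply: leq_trans (card_switching_typed_cell FF tF) _.
apply/subset_leq_card/subsetP => d; rewrite !inE => /andP[dF sd].
by rewrite -(face_eq FF dF) sd eqxx /= FF tF.
Qed.

Lemma vx_in_face_eq n (d x : D) :
  #|face d| = n.+1 -> (forall i, 0 < i <= n -> cx (iter i phi d)) ->
  x \in face d -> vx x -> x = d.
Proof.
move=> card_d cx_d xd vxx; have dx : fconnect phi d x by rewrite inE in xd.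
have order_d : fingraph.order phi d = n.+1.
  by rewrite -card_d; apply: eq_card => z; rewrite /face inE.
have := findex_max dx; rewrite order_d ltnS => le_n.
case: (posnP (findex phi d x)) => [x_d | pos]; first by rewrite -(iter_findex dx) x_d.
by move: (cx_d _ (introT andP (conj pos le_n))); rewrite iter_findex // cxE vxx.
Qed.

Lemma typeB4_typeU5F (F : {set D}) : F \in faces G -> typeB4 F && typeU5 F = false.
Proof.
move=> FF; apply/andP => -[/andP[/eqP F3 /existsP[d /andP[Fd /and3P[_ c1 c2]]]]].
move=> /andP[_ /existsP[x /andP[Fx /and3P[vx1 vx2 _]]]].
rewrite (face_eq FF Fd) in F3 Fx.
have xd : x = d by apply: (vx_in_face_eq F3) Fx vx1; case=> [|[|[|]]].
by move: c1; rewrite -xd cxE vx2.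
Qed.

Lemma typeB5_typeU6F (F : {set D}) : F \in faces G -> typeB5 F && typeU6 F = false.
Proof.
move=> FF; apply/andP => -[/andP[/eqP F4 /existsP[d /andP[Fd /and4P[_ c1 c2 c3]]]]].
move=> /andP[_ /existsP[x /andP[Fx /and4P[vx1 vx2 _ _]]]].
rewrite (face_eq FF Fd) in F4 Fx.
have xd : x = d by apply: (vx_in_face_eq F4) Fx vx1; case=> [|[|[|[|]]]].
by move: c1; rewrite -xd cxE vx2.
Qed.

Lemma typed_cell_count (F : {set D}) :
  F \in faces G -> typeB4 F + typeB5 F + typeU5 F + typeU6 F = typed_cell F.
Proof.
move=> FF.
have size3 : typeB4 F || typeU5 F -> #|F| = 3 by case/orP => /andP[/eqP].
have size4 : typeB5 F || typeU6 F -> #|F| = 4 by case/orP => /andP[/eqP].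
have sizes : [&& typeB4 F || typeU5 F & typeB5 F || typeU6 F] = false.
  by apply/andP => -[/size3 F3 /size4]; rewrite F3.
move: sizes (typeB4_typeU5F FF) (typeB5_typeU6F FF); rewrite /typed_cell.
by case: (typeB4 F); case: (typeB5 F); case: (typeU5 F); case: (typeU6 F).
Qed.

Lemma N_sum (T : {set D} -> bool) : N T = \sum_(F in faces G) T F.
Proof.
rewrite /N -sum1_card (eq_bigl (fun F => (F \in faces G) && T F)) => [|F]; last by rewrite inE.
by rewrite big_mkcondr; apply: eq_bigr => F _; case: (T F).
Qed.

Lemma N_typed_cell :
  N (@typeB4 G) + N (@typeB5 G) + N (@typeU5 G) + N (@typeU6 G) = N typed_cell.
Proof. by rewrite !N_sum -!big_split; apply: eq_bigr => F; apply: typed_cell_count. Qed.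

End Drawing.

Theorem mainTheorem5 (G : pdrawing) :
  is_drawing G -> connected_drawing G -> three_plane G ->
  2 * N (@typeB4 G) + 2 * N (@typeB5 G) + 2 * N (@typeU5 G) + 2 * N (@typeU6 G)
    <= 4 * #|Ecross G|.
Proof.
move=> [alphaK [_ [node_orbit [_ [_ [card_cr [eof_cr [_ [eof_alpha [card_end _]]]]]]]]]] _ _.
have eof_pass (d : dart G) : cx d -> peof (pass d) = peof d by move=> /eof_cr[].
rewrite -!mulnDr (N_typed_cell alphaK).
apply: leq_trans (card_typed_cells alphaK) _.
exact: card_switching alphaK node_orbit card_cr eof_pass eof_alpha card_end.
Qed.
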